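(* Let $R$ be a commutative domain with unit and let $f\in R$ be a nonzero non-invertible element. Let $S=R[u,v]/(uv-f)$, where $R[u,v]$ is the polynomial ring in two variables over $R$. Then $S$ is a unique factorization domain if and only if $R$ is a unique factorization domain and $f$ is a prime element of $R$. *)

From HB Require Import structures.
From mathcomp Require Import all_boot all_order all_algebra.
From mathcomp Require Import boolp.
Set Implicit Arguments. Unset Strict Implicit. Unset Printing Implicit Defensive.
Import Order.TTheory GRing.Theory.
Local Open Scope ring_scope.

Section Divisibility.
Variable A : comNzRingType.

Definition rdvd (a b : A) : Prop := exists c, b = a * c.
Definition runit (a : A) : Prop := rdvd a 1.
Definition rassoc (a b : A) : Prop := exists w, runit w /\ b = a * w.

Definition rirreducible (a : A) : Prop :=
  [/\ a != 0, ~ runit a & forall b c, a = b * c -> runit b \/ runit c].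

Definition rprime (a : A) : Prop :=
  [/\ a != 0, ~ runit a & forall b c, rdvd a (b * c) -> rdvd a b \/ rdvd a c].

(* integral domain (1 != 0 is built into comNzRingType) *)
Definition is_domain : Prop := forall a b : A, a * b = 0 -> a = 0 \/ b = 0.

Definition UFD : Prop :=
  [/\ is_domain,
      (forall a : A, a != 0 -> ~ runit a ->
         exists s : seq A, [/\ s != [::], (forall x, x \in s -> rirreducible x)
                              & a = \prod_(x <- s) x])
    & (forall s t : seq A,
         (forall x, x \in s -> rirreducible x) ->
         (forall x, x \in t -> rirreducible x) ->
         \prod_(x <- s) x = \prod_(x <- t) x ->
         size s = size t /\
         exists2 t' : seq A, perm_eq t t' &
           forall i, (i < size s)%N -> rassoc (nth 0 s i) (nth 0 t' i))].
End Divisibility.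

Section UVQuotient.
Variable R : idomainType.

(* R[u,v] is {poly {poly R}}: u is the inner variable, v the outer one *)
Definition var_u : {poly {poly R}} := ('X)%:P.
Definition var_v : {poly {poly R}} := 'X.
Definition uv_f (f : R) : {poly {poly R}} := var_u * var_v - (f%:P)%:P.

(* the principal ideal (uv - f); the (unused) non-unit hypothesis on f only
   serves to make the quotient a nontrivial ring *)
Definition uvf_ideal (f : R) (hf : f \isn't a GRing.unit) : {poly {poly R}} -> bool :=
  fun p => `[< exists q, p = q * uv_f f >].

Lemma uvf_ideal_closed (f : R) (hf : f \isn't a GRing.unit) :
  idealr_closed (uvf_ideal hf).
Proof.
split.
- by apply/asboolP; exists 0; rewrite mul0r.
- apply/negP => /asboolP [q hq].
  have := congr1 (fun p : {poly {poly R}} => p.[0].[0]) hq.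
  rewrite /= hornerM /uv_f /var_u /var_v !hornerE /=.
  idtac.
  move=> h; move/negP: hf; apply; apply/unitrPr; exists (- (q.[0]).[0]).
  by rewrite h !mulrN mulrC.
- move=> a p1 p2 /asboolP [q1 ->] /asboolP [q2 ->].
  by apply/asboolP; exists (a * q1 + q2); rewrite mulrDl mulrA.
Qed.

HB.instance Definition _ (f : R) (hf : f \isn't a GRing.unit) :=
  isIdealr.Build {poly {poly R}} (uvf_ideal hf) (uvf_ideal_closed hf).

Definition uvf_idealr (f : R) (hf : f \isn't a GRing.unit) : idealr {poly {poly R}} :=
  uvf_ideal hf.
Definition S_uv (f : R) (hf : f \isn't a GRing.unit) : comNzRingType :=
  {ideal_quot (uvf_idealr hf)}.
End UVQuotient.

From HB Require Import structures.
From mathcomp Require Import all_boot all_order all_algebra.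
From mathcomp Require Import boolp zify ring.

(* Inverting [u] turns [S] into [R[u, 1/u]] (with [v = f/u]), and [S/(u)] is [(R/f)[v]].
   Hence [S] is a domain in which [u] is irreducible, and [u] is prime exactly when [f] is.
   If [S] is factorial, [u] is prime, so [f] is prime; moreover the prime factors in [S] of an
   element of [R] are, up to units of [R], primes of [R], [u] or [v], and comparing the two sides
   in [R[u]] yields a factorization in [R].  Conversely, if [R] is factorial then so is [R[u]]
   (Gauss), and in [S] a prime of [R[u]] becomes a unit times a power of the prime [u] times a
   prime; since every element of [S] times a power of [u] lies in [R[u]], [S] is factorial
   (Nagata's argument). *)

Set Implicit Arguments. Unset Strict Implicit. Unset Printing Implicit Defensive.
Import GRing.Theory.
Local Open Scope ring_scope.

Section Divisibility.
Variable A : comNzRingType.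
Implicit Types (a b c d e p x : A) (s t : seq A).

Lemma rdvd_refl a : rdvd a a.
Proof. by exists 1; rewrite mulr1. Qed.

Lemma rdvd_trans a b c : rdvd a b -> rdvd b c -> rdvd a c.
Proof. by move=> [x ->] [y ->]; exists (x * y); rewrite mulrA. Qed.

Lemma rdvd_mulr a b c : rdvd a b -> rdvd a (b * c).
Proof. by move=> [x ->]; exists (x * c); rewrite mulrA. Qed.

Lemma rdvd_mull a b c : rdvd a b -> rdvd a (c * b).
Proof. by rewrite mulrC; apply: rdvd_mulr. Qed.

Lemma rdvd_mul2 a b c d : rdvd a b -> rdvd c d -> rdvd (a * c) (b * d).
Proof. by move=> [x ->] [y ->]; exists (x * y); rewrite mulrACA. Qed.

Lemma rdvd0 a : rdvd a 0.
Proof. by exists 0; rewrite mulr0. Qed.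

Lemma rdvdD a b c : rdvd a b -> rdvd a c -> rdvd a (b + c).
Proof. by move=> [x ->] [y ->]; exists (x + y); rewrite mulrDr. Qed.

Lemma rdvdB a b c : rdvd a b -> rdvd a c -> rdvd a (b - c).
Proof. by move=> hb [y ->]; apply: rdvdD hb _; exists (- y); rewrite mulrN. Qed.

Lemma rdvd_addl a b c : rdvd a c -> rdvd a (b + c) -> rdvd a b.
Proof. by move=> hc /rdvdB /(_ hc); rewrite addrK. Qed.

Lemma rdvd_sum a (I : Type) (r : seq I) (P : pred I) (F : I -> A) :
  (forall i, P i -> rdvd a (F i)) -> rdvd a (\sum_(i <- r | P i) F i).
Proof. by move=> h; apply: big_ind => //; [exact: rdvd0 | exact: rdvdD]. Qed.

Lemma rdvd_exp a b n : rdvd a b -> rdvd (a ^+ n) (b ^+ n).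
Proof. by move=> [x ->]; exists (x ^+ n); rewrite exprMn. Qed.

Lemma rdvd_expn a m n : (m <= n)%N -> rdvd (a ^+ m) (a ^+ n).
Proof. by move=> h; exists (a ^+ (n - m)); rewrite -exprD subnKC. Qed.

Lemma rdvd_prod x s : x \in s -> rdvd x (\prod_(y <- s) y).
Proof. by move=> xs; rewrite (big_rem _ xs) /=; apply/rdvd_mulr/rdvd_refl. Qed.

Lemma runit1 : runit (1 : A).
Proof. exact: rdvd_refl. Qed.

Lemma runitM a b : runit a -> runit b -> runit (a * b).
Proof. by move=> [x hx] [y hy]; exists (x * y); rewrite mulrACA -hx -hy mulr1. Qed.

Lemma runitMl a b : runit (a * b) -> runit a.
Proof. by move=> [x hx]; exists (b * x); rewrite mulrA. Qed.

Lemma runitMr a b : runit (a * b) -> runit b.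
Proof. by rewrite mulrC; apply: runitMl. Qed.

Lemma runit_dvd a b : runit b -> rdvd a b -> runit a.
Proof. by move=> hb [x hx]; move: hb; rewrite hx; apply: runitMl. Qed.

Lemma rdvd_unit a b : runit a -> rdvd a b.
Proof. by move=> [x hx]; exists (x * b); rewrite mulrA -hx mul1r. Qed.

Lemma runit_neq0 a : runit a -> a != 0.
Proof.
by move=> [x hx]; apply/eqP => a0; move: hx; rewrite a0 mul0r; apply/eqP; apply: oner_neq0.
Qed.

Lemma rdvd_unitMl a b e : runit e -> rdvd a (e * b) -> rdvd a b.
Proof.
move=> [x hx] [y hy]; exists (x * y).
by rewrite mulrCA -hy mulrA (mulrC x) -hx mul1r.
Qed.

Lemma rdvd_mulr_unit a b e : runit e -> rdvd a b -> rdvd (a * e) b.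
Proof. by move=> [x hx] [y ->]; exists (x * y); rewrite -mulrA (mulrA e) -hx mul1r. Qed.

Lemma rassoc_dvd a b : rassoc a b -> rdvd b a.
Proof. by move=> [w [[w' hw] ->]]; exists w'; rewrite -mulrA -hw mulr1. Qed.

Lemma rprime_neq0 p : rprime p -> p != 0.
Proof. by case. Qed.

Lemma rprime_dvd_prod p s : rprime p -> rdvd p (\prod_(x <- s) x) ->
  exists2 x, x \in s & rdvd p x.
Proof.
move=> [p0 pu pp]; elim: s => [|x s IH]; first by rewrite big_nil => /pu.
rewrite big_cons => /pp [h|/IH [y ys py]]; first by exists x; rewrite ?mem_head.
by exists y; rewrite // in_cons ys orbT.
Qed.

Lemma prod_nseq x n : \prod_(y <- nseq n x) y = x ^+ n.
Proof. by elim: n => [|n IH]; rewrite ?big_nil ?expr0 // big_cons IH exprS. Qed.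

Lemma rprime_dvd_exp p x n : rprime p -> rdvd p (x ^+ n) -> rdvd p x.
Proof.
move=> [_ pu pp]; elim: n => [|n IH]; first by rewrite expr0 => /(runit_dvd runit1) /pu.
by rewrite exprS => /pp [].
Qed.

Lemma rdvd_exp_max x a : (exists n, ~ rdvd (x ^+ n) a) ->
  exists n b, a = x ^+ n * b /\ ~ rdvd x b.
Proof.
move=> [n0 hn0]; have ex : exists n, `[< ~ rdvd (x ^+ n) a >] by exists n0; apply/asboolP.
case: (ex_minnP ex) => -[|n] /asboolP hn min_n.
  by case: hn; apply: rdvd_unit; rewrite expr0; apply: runit1.
have [b hb] : rdvd (x ^+ n) a.
  by apply: contrapT => /asboolP /min_n; rewrite ltnn.
exists n, b; split => // -[c hc]; apply: hn; exists c.
by rewrite hb hc mulrA -exprSr.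
Qed.

Definition has_prime_factorization a := exists e s,
  [/\ runit e, (forall x, x \in s -> rprime x) & a = e * \prod_(x <- s) x].

Definition prime_factorizable := forall a, a != 0 -> has_prime_factorization a.

Lemma prime_factorizationM a b : has_prime_factorization a ->
  has_prime_factorization b -> has_prime_factorization (a * b).
Proof.
move=> [e [s [he hs ->]]] [e' [s' [he' hs' ->]]].
exists (e * e'), (s ++ s'); split; first exact: runitM.
  by move=> x; rewrite mem_cat => /orP [/hs | /hs'].
by rewrite big_cat /= mulrACA.
Qed.

Lemma prime_factorization_prime p : rprime p -> has_prime_factorization p.
Proof.
move=> hp; exists 1, [:: p]; split; first exact: runit1.
  by move=> x; rewrite inE => /eqP ->.
by rewrite big_seq1 mul1r.
Qed.

Lemma prime_factorization_unit e : runit e -> has_prime_factorization e.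
Proof. by move=> he; exists e, [::]; rewrite big_nil mulr1. Qed.

Lemma prime_factorization_prod (I : eqType) (r : seq I) (F : I -> A) :
  (forall i, i \in r -> has_prime_factorization (F i)) ->
  has_prime_factorization (\prod_(i <- r) F i).
Proof.
elim: r => [|i r IH] hr; first by rewrite big_nil; apply/prime_factorization_unit/runit1.
rewrite big_cons; apply: prime_factorizationM; first exact/hr/mem_head.
by apply: IH => j jr; apply: hr; rewrite in_cons jr orbT.
Qed.

Section Domain.
Hypothesis A_domain : is_domain A.

Lemma dmulf_neq0 a b : a != 0 -> b != 0 -> a * b != 0.
Proof. by move=> ha hb; apply/eqP => /A_domain [] /eqP; apply/negP. Qed.

Lemma dmulfI a b c : a != 0 -> a * b = a * c -> b = c.
Proof.
move=> ha h; apply/eqP; rewrite -subr_eq0; apply/eqP.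
have /A_domain [a0|//] : a * (b - c) = 0 by rewrite mulrBr h subrr.
by move: ha; rewrite a0 eqxx.
Qed.

Lemma rprime_unitMl p e : runit e -> rprime p -> rprime (e * p).
Proof.
move=> he [p0 pu pp]; split.
- by apply: dmulf_neq0 => //; apply: runit_neq0.
- by move/runitMr.
- move=> b c h; have /pp [] : rdvd p (b * c) by apply: rdvd_trans h; apply/rdvd_mull/rdvd_refl.
    by left; rewrite mulrC; apply: rdvd_mulr_unit.
  by right; rewrite mulrC; apply: rdvd_mulr_unit.
Qed.

Lemma rprime_irreducible p : rprime p -> rirreducible p.
Proof.
move=> [p0 pu pp]; split => // b c hbc.
have /pp [[x hx]|[x hx]] : rdvd p (b * c) by rewrite -hbc; apply: rdvd_refl.
- by right; exists x; apply: (@dmulfI p) => //; rewrite mulr1 {1}hbc hx mulrAC mulrA.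
- by left; exists x; apply: (@dmulfI p) => //; rewrite mulr1 {1}hbc hx mulrCA.
Qed.

Lemma rirreducible_unitMl p e : runit e -> rirreducible p -> rirreducible (e * p).
Proof.
move=> [x hx] [p0 pu pirr]; split.
- by apply: dmulf_neq0 => //; apply: runit_neq0; exists x.
- by move/runitMr.
- move=> b c h; have /pirr [/runitMr|] : p = (x * b) * c.
    by rewrite -mulrA -h mulrA (mulrC x) -hx mul1r.
  by left. by right.
Qed.

Lemma prime_dvd_prime p q : rprime p -> rprime q -> rdvd p q ->
  exists2 c, runit c & q = p * c.
Proof.
move=> hp hq [c hc]; exists c => //.
have [_ _ /(_ _ _ hc) [pu|//]] := rprime_irreducible hq.
by case: hp.
Qed.

Lemma rprime_mul_exp a w k : ~ runit w ->
  rprime (a * w ^+ k) -> k = 0%N \/ (k = 1%N /\ runit a).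
Proof.
move=> wu; case: k => [|j] hp; first by left.
have [_ _ /(_ (a * w ^+ j) w)] := rprime_irreducible hp.
rewrite exprSr mulrA => /(_ erefl) [haj|//]; right; split; last exact: runitMl haj.
by case: j haj {hp} => // j /runitMr; rewrite exprS => /runitMl.
Qed.

Lemma prime_factorization_cancel p a : rprime p ->
  has_prime_factorization (p * a) -> has_prime_factorization a.
Proof.
move=> hp [e [t [he ht ea]]].
have /(rprime_dvd_prod hp) [y yt] : rdvd p (\prod_(x <- t) x).
  by apply: (rdvd_unitMl he); rewrite -ea; apply/rdvd_mulr/rdvd_refl.
move=> /(prime_dvd_prime hp (ht y yt)) [u uu hy].
exists (e * u), (rem y t); split; [exact: runitM | by move=> z /mem_rem /ht |].
by apply: (dmulfI (rprime_neq0 hp)); rewrite ea (big_rem _ yt) /= hy; ring.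
Qed.

Lemma prime_factorization_cancel_exp p n a : rprime p ->
  has_prime_factorization (p ^+ n * a) -> has_prime_factorization a.
Proof.
move=> hp; elim: n => [|n IH]; first by rewrite expr0 mul1r.
by rewrite exprS -mulrA => /(prime_factorization_cancel hp) /IH.
Qed.

Lemma prime_factorization_unique s t e : runit e ->
  (forall x, x \in s -> rprime x) -> (forall x, x \in t -> rprime x) ->
  \prod_(x <- s) x = e * \prod_(x <- t) x ->
  size s = size t /\
  exists2 t' : seq A, perm_eq t t' &
    forall i, (i < size s)%N -> rassoc (nth 0 s i) (nth 0 t' i).
Proof.
elim: s t e => [|x s IH] t e he hs ht.
  case: t ht => [|y t] ht; first by split => //; exists [::].
  rewrite big_nil big_cons => h; have [_ yu _] := ht y (mem_head _ _).
  by case: yu; apply: (@runitMl _ (e * \prod_(x <- t) x)); exists 1; rewrite mulr1 mulrCA -h.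
rewrite big_cons => h; have hx := hs x (mem_head _ _).
have : rdvd x (e * \prod_(y <- t) y) by rewrite -h; apply/rdvd_mulr/rdvd_refl.
move=> /(rdvd_unitMl he) /(rprime_dvd_prod hx) [y yt /(prime_dvd_prime hx (ht y yt))].
move=> [c cu hc]; move: h; rewrite (big_rem _ yt) /= {1}hc.
rewrite -mulrA mulrCA [e * _]mulrA mulrCA => /(dmulfI (rprime_neq0 hx)) h.
have [] := IH (rem y t) (e * c) (runitM he cu) _ _ h.
- by move=> z hz; apply: hs; rewrite in_cons hz orbT.
- by move=> z /mem_rem /ht.
move=> hsz [t' hp hi]; split; first by rewrite (perm_size (perm_to_rem yt)) /= hsz.
exists (y :: t'); first by apply: perm_trans (perm_to_rem yt) _; rewrite perm_cons.
by move=> [|i] hi' /=; [exists c | apply: hi].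
Qed.

Lemma prime_factorizable_irreducible_prime :
  prime_factorizable -> forall a, rirreducible a -> rprime a.
Proof.
move=> hPF a ha; have [a0 _ _] := ha; have [e [[|x s] [he hs ea]]] := hPF a a0.
  by case: ha => _ []; rewrite ea big_nil mulr1.
case: ha => _ _; rewrite ea big_cons mulrA => /(_ _ _ erefl) [/runitMr xu|su].
  by case: (hs x (mem_head _ _)).
rewrite mulrC mulrA; apply: rprime_unitMl; first exact: runitM.
exact: hs (mem_head _ _).
Qed.

Lemma prime_factorizable_UFD : prime_factorizable -> UFD A.
Proof.
move=> hPF; split => //.
- move=> a a0 au; have [e [[|x s] [he hs ea]]] := hPF a a0.
    by case: au; rewrite ea big_nil mulr1.
  exists ((e * x) :: s); split => //; last by rewrite ea !big_cons mulrA.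
  move=> y; rewrite inE => /orP [/eqP ->|hy]; apply: rprime_irreducible.
    by apply: rprime_unitMl => //; apply: hs (mem_head _ _).
  by apply: hs; rewrite in_cons hy orbT.
- move=> s t hs ht h; apply: (prime_factorization_unique runit1).
  + by move=> x /hs; apply: prime_factorizable_irreducible_prime.
  + by move=> x /ht; apply: prime_factorizable_irreducible_prime.
  + by rewrite mul1r.
Qed.

Lemma prime_pow_dvd_coprime p x b n : rprime p -> ~ rdvd p x ->
  rdvd (p ^+ n) (x * b) -> rdvd (p ^+ n) b.
Proof.
move=> hp hpx; elim: n b => [|n IH] b h; first by apply: rdvd_unit; rewrite expr0; apply: runit1.
have [p0 _ pp] := hp.
have /pp [//|[b' hb']] : rdvd p (x * b).
  by apply: rdvd_trans h; rewrite exprS; apply/rdvd_mulr/rdvd_refl.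
move: h; rewrite hb' => -[y hy].
have /IH : rdvd (p ^+ n) (x * b') by exists y; apply: (dmulfI p0); rewrite mulrCA hy exprS mulrA.
by rewrite exprS; apply: rdvd_mul2; apply: rdvd_refl.
Qed.

Lemma prime_factorizable_pow_ndvd y a : prime_factorizable ->
  y != 0 -> ~ runit y -> a != 0 -> exists n, ~ rdvd (y ^+ n) a.
Proof.
move=> hPF y0 yu a0.
have [ey [[|p l] [hey hl ey_]]] := hPF y y0.
  by case: yu; rewrite ey_ big_nil mulr1.
have [e [s [[x hx] hs ea]]] := hPF a a0.
exists (size s).+1 => hfa; set N := (size s).+1 in hfa.
have [c hc] : rdvd (p ^+ N) a.
  apply: rdvd_trans hfa; apply: rdvd_exp.
  by rewrite ey_ big_cons mulrCA; apply/rdvd_mulr/rdvd_refl.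
have c0 : c != 0 by apply: contra_neq a0 => c0; rewrite hc c0 mulr0.
have [e' [s' [he' hs' ec]]] := hPF c c0.
have [] := @prime_factorization_unique s (nseq N p ++ s') (x * e') _ hs _ _.
- by apply: runitM => //; exists e; rewrite mulrC.
- move=> z; rewrite mem_cat mem_nseq => /orP [/andP [_ /eqP ->]|/hs'] //.
  exact: hl (mem_head _ _).
- by rewrite big_cat prod_nseq /= -mulrA (mulrCA e') -ec -hc ea mulrA (mulrC x) -hx mul1r.
by rewrite size_cat size_nseq /N; lia.
Qed.

End Domain.

Lemma UFD_factorization : UFD A -> forall a, a != 0 -> exists e s,
  [/\ runit e, (forall x, x \in s -> rirreducible x) & a = e * \prod_(x <- s) x].
Proof.
move=> [_ hex _] a a0; have [au|au] := pselect (runit a).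
  by exists a, [::]; rewrite big_nil mulr1.
by have [s [_ hs ->]] := hex a a0 au; exists 1, s; rewrite mul1r; split => //; apply: runit1.
Qed.

Lemma UFD_irreducible_prime : UFD A -> forall a, rirreducible a -> rprime a.
Proof.
move=> hU a ha; have [Ad _ hun] := hU; have [a0 au _] := ha; split => // b c [d hd].
have [->|b0] := eqVneq b 0; first by left; apply: rdvd0.
have [->|c0] := eqVneq c 0; first by right; apply: rdvd0.
have d0 : d != 0 by apply: contra_neq (dmulf_neq0 Ad b0 c0) => d0; rewrite hd d0 mulr0.
have [eb [sb [[xb hxb] hsb eb_]]] := UFD_factorization hU b0.
have [ec [sc [[xc hxc] hsc ec_]]] := UFD_factorization hU c0.
have [ed [sd [hed hsd ed_]]] := UFD_factorization hU d0.
set a' := ed * xb * xc * a.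
have a'u : runit (ed * xb * xc).
  by do 2?apply: runitM => //; [exists eb; rewrite mulrC | exists ec; rewrite mulrC].
have [] := hun (sb ++ sc) (a' :: sd).
- by move=> x; rewrite mem_cat => /orP [/hsb | /hsc].
- by move=> x; rewrite inE => /orP [/eqP -> | /hsd]; first exact: rirreducible_unitMl.
- rewrite big_cat big_cons /=.
  transitivity (eb * xb * (ec * xc) * (\prod_(x <- sb) x * \prod_(x <- sc) x)).
    by rewrite -hxb -hxc !mul1r.
  have -> : eb * xb * (ec * xc) * (\prod_(x <- sb) x * \prod_(x <- sc) x) =
            xb * xc * (b * c) by rewrite eb_ ec_; ring.
  by rewrite hd ed_ /a'; ring.
move=> hsz [t' ht' hi]; have a't' : a' \in t' by rewrite -(perm_mem ht') mem_head.
have ilt : (index a' t' < size (sb ++ sc))%N by rewrite hsz (perm_size ht') index_mem.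
have := hi _ ilt; rewrite nth_index // => /rassoc_dvd /(rdvd_trans (rdvd_mull _ (rdvd_refl a))).
have : nth 0 (sb ++ sc) (index a' t') \in sb ++ sc by apply: mem_nth.
rewrite mem_cat => /orP [] /rdvd_prod hz /rdvd_trans => /(_ _ hz) h.
  by left; rewrite eb_; apply: rdvd_mull.
by right; rewrite ec_; apply: rdvd_mull.
Qed.

Lemma UFDP : UFD A <-> is_domain A /\ prime_factorizable.
Proof.
split => [hU|[Ad hPF]]; last exact: prime_factorizable_UFD.
split; first by case: hU.
move=> a a0; have [e [s [he hs ->]]] := UFD_factorization hU a0.
by exists e, s; split => // x /hs; apply: UFD_irreducible_prime.
Qed.

End Divisibility.

Lemma rmorph_runit (A B : comNzRingType) (g : {rmorphism A -> B}) a :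
  runit a -> runit (g a).
Proof. by move=> [x hx]; exists (g x); rewrite -rmorphM -hx rmorph1. Qed.

Lemma runitP (B : comUnitRingType) (a : B) : runit a <-> a \is a GRing.unit.
Proof. by split => [[x hx]|/unitrPr [x hx]]; [apply/unitrPr|]; exists x. Qed.

Lemma idomain_domain (B : idomainType) : is_domain B.
Proof. by move=> a b /eqP; rewrite mulf_eq0 => /orP [] /eqP; [left|right]. Qed.

Section PolyFactorization.
Variable R : idomainType.
Implicit Types (c e p : R) (a b g h q r : {poly R}).

Lemma polyC_runit c : runit (c%:P : {poly R}) <-> runit c.
Proof.
rewrite !runitP poly_unitE size_polyC coefC /=.
by have [->|c0] := eqVneq c 0; [rewrite unitr0 | ].
Qed.

Lemma rdvd_polyC c g : rdvd c%:P g <-> forall i, rdvd c g`_i.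
Proof.
split => [[h ->] i|/choice [F hF]]; first by rewrite coefCM; exists h`_i.
exists (\poly_(i < size g) F i); apply/polyP => i.
rewrite coefCM coef_poly; case: ltnP => hi; first exact: hF.
by rewrite mulr0 nth_default.
Qed.

Lemma rdvd_polyC_lowest p g : ~ rdvd p%:P g ->
  exists i0, ~ rdvd p g`_i0 /\ forall i, (i < i0)%N -> rdvd p g`_i.
Proof.
move=> npg; have [i ni] : exists i, ~ rdvd p g`_i.
  by apply/existsNP => hall; apply/npg/rdvd_polyC.
have ex : exists i, `[< ~ rdvd p g`_i >] by exists i; apply/asboolP.
case: (ex_minnP ex) => i0 /asboolP hi0 min0; exists i0; split => // j ji0.
by apply: contrapT => /asboolP /min0; rewrite leqNgt ji0.
Qed.

Lemma rdvd_coefM_lowest p g h i0 j0 :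
  (forall i, (i < i0)%N -> rdvd p g`_i) -> (forall j, (j < j0)%N -> rdvd p h`_j) ->
  rdvd p (g * h)`_(i0 + j0) -> rdvd p (g`_i0 * h`_j0).
Proof.
move=> hg hh; have i0_lt : (i0 < (i0 + j0).+1)%N by rewrite ltnS leq_addr.
rewrite coefM (bigD1 (Ordinal i0_lt)) //= addKn; apply: rdvd_addl.
apply: rdvd_sum => i hi.
have [ilt|igt|ieq] := ltngtP i i0; first exact/rdvd_mulr/hg.
  by apply/rdvd_mull/hh; have := ltn_ord i; lia.
by case/eqP: hi; apply: val_inj.
Qed.

Lemma polyC_prime p : rprime p -> rprime (p%:P : {poly R}).
Proof.
move=> [p0 pu pp]; split; [by rewrite polyC_eq0 | by move/polyC_runit |].
move=> g h /rdvd_polyC ghd; apply: contrapT => /not_orP [].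
move=> /rdvd_polyC_lowest [i0 [gi0 hg]] /rdvd_polyC_lowest [j0 [hj0 hh]].
by have /pp [] := rdvd_coefM_lowest hg hh (ghd (i0 + j0)%N).
Qed.

Lemma prime_factorization_polyC c : has_prime_factorization c ->
  has_prime_factorization (c%:P : {poly R}).
Proof.
move=> [e [s [he hs ->]]]; exists e%:P, (map polyC s); split.
- exact/polyC_runit.
- by move=> x /mapP [y ys ->]; apply/polyC_prime/hs.
- by rewrite polyCM rmorph_prod big_map.
Qed.

Definition primitive q := forall p, rprime p -> ~ rdvd p%:P q.

Lemma primitive_dvd q g : primitive g -> rdvd q g -> primitive q.
Proof. by move=> gp qg p hp /rdvd_trans /(_ qg); apply: gp. Qed.

Lemma rirreducible_primitive q : rirreducible q -> (1 < size q)%N -> primitive q.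
Proof.
move=> [q0 qu qi] hs p [p0 pu _] [r hr].
have [/polyC_runit //|/runitP] := qi _ _ hr.
rewrite poly_unitE => /andP [/eqP sr _].
by move: hs; rewrite hr size_Cmul ?sr.
Qed.

Section Factorizable.
Hypothesis R_factorizable : prime_factorizable R.
Let R_domain := @idomain_domain R.
Let P_domain := @idomain_domain {poly R}.

Lemma primitive_dvd_polyCM q c g : primitive q -> c != 0 -> rdvd q (c%:P * g) -> rdvd q g.
Proof.
move=> qp c0; have [e [s [he hs ->]]] := R_factorizable c0.
elim: s g hs => [|x s IH] g hs.
  by rewrite big_nil mulr1; apply: rdvd_unitMl; apply/polyC_runit.
have [x0 _ xp] := polyC_prime (hs x (mem_head _ _)).
have -> : (e * \prod_(y <- x :: s) y)%:P * g = (e * \prod_(y <- s) y)%:P * (x%:P * g).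
  by rewrite big_cons !polyCM; ring.
move=> /IH [y hy|w hw]; first by apply: hs; rewrite in_cons hy orbT.
have /xp [/(qp x (hs x (mem_head _ _))) //|[w' hw']] : rdvd x%:P (q * w).
  by rewrite -hw; apply/rdvd_mulr/rdvd_refl.
by exists w'; apply: (dmulfI P_domain x0); rewrite hw hw' mulrCA.
Qed.

(* If [q | g h], the ideal [J] of all [a] with [q | a h] contains [q] and [g].  Pseudo-division
   by an element [r0] of [J] of least degree shows that [J] consists of multiples of [r0] up to
   constants, and as [q] is primitive these constants can be removed prime by prime: this
   yields a common divisor of [q] and [r0] in [J], that is a unit or an associate of [q]. *)
Section IrreduciblePrime.
Variables q h : {poly R}.
Hypotheses (q_irr : rirreducible q) (q_size : (1 < size q)%N).

Let J a := rdvd q (a * h).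

Let JB a b : J a -> J b -> J (a - b).
Proof. by rewrite /J mulrBl; apply: rdvdB. Qed.

Let JM a b : J b -> J (a * b).
Proof. by rewrite /J -mulrA; apply: rdvd_mull. Qed.

Let Jq : J q.
Proof. exact/rdvd_mulr/rdvd_refl. Qed.

Lemma ideal_pseudo_generator : exists r0, [/\ J r0, r0 != 0 &
  forall a, J a -> exists2 c, c != 0 & rdvd r0 (c%:P * a)].
Proof.
have ex : exists n, `[< exists r, [/\ J r, r != 0 & size r = n] >].
  by exists (size q); apply/asboolP; exists q; split => //; case: q_irr.
case: (ex_minnP ex) => n0 /asboolP [r0 [Jr0 r00 sr0]] min0.
exists r0; split => // a Ja; exists (lead_coef r0 ^+ scalp a r0).
  by rewrite expf_neq0 // lead_coef_eq0.
have hdiv := Pdiv.Idomain.divp_eq a r0.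
suff m0 : a %% r0 = 0 by exists (a %/ r0); rewrite mul_polyC hdiv m0 addr0 mulrC.
apply: contrapT => /eqP m0.
have Jm : J (a %% r0).
  have -> : a %% r0 = (lead_coef r0 ^+ scalp a r0)%:P * a - (a %/ r0) * r0.
    by rewrite mul_polyC hdiv addrC addKr.
  by apply: JB; apply: JM.
have : (n0 <= size (a %% r0)%R)%N by apply: min0; apply/asboolP; exists (a %% r0).
by rewrite -sr0 leqNgt ltn_modpN0.
Qed.

Lemma ideal_constant_descent c b r d : c != 0 -> J r -> c%:P * b = d * r ->
  exists r', [/\ J r', rdvd r' b & rdvd r' r].
Proof.
have qp := rirreducible_primitive q_irr q_size.
move=> c0; have [e [s [he hs ->]]] := R_factorizable c0.
elim: s r d hs => [|x s IH] r d hs Jr.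
  rewrite big_nil mulr1 => hd; exists r; split => //; last exact: rdvd_refl.
  apply: (@rdvd_unitMl _ _ _ e%:P); first exact/polyC_runit.
  by rewrite hd; apply/rdvd_mull/rdvd_refl.
have hs' y : y \in s -> rprime y by move=> ys; apply: hs; rewrite in_cons ys orbT.
have hx := hs x (mem_head _ _); have [x0 _ xp] := polyC_prime hx.
rewrite big_cons mulrCA polyCM -mulrA => hd.
have /xp [[d' hd']|[r' hr']] : rdvd x%:P (d * r) by rewrite -hd; apply/rdvd_mulr/rdvd_refl.
  by apply: (IH r d') => //; apply: (dmulfI P_domain x0); rewrite hd hd' mulrA.
have Jr' : J r'.
  by apply: (primitive_dvd_polyCM qp (rprime_neq0 hx)); move: Jr; rewrite /J hr' mulrA.
have [r'' [Jr'' r''b r''r']] : exists r'', [/\ J r'', rdvd r'' b & rdvd r'' r'].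
  by apply: (IH r' d) => //; apply: (dmulfI P_domain x0); rewrite hd hr' mulrCA.
by exists r''; split => //; rewrite hr'; apply: rdvd_mull.
Qed.

End IrreduciblePrime.

Lemma rirreducible_poly_prime q : rirreducible q -> (1 < size q)%N -> rprime q.
Proof.
move=> q_irr q_size; have qp := rirreducible_primitive q_irr q_size.
have [q0 qu qi] := q_irr; split => // g h hgh.
have [qg|qg] := pselect (rdvd q g); [by left | right].
have [r0 [Jr0 _ hr0]] := ideal_pseudo_generator h q_irr.
have [c c0 [d hd]] := hr0 q (rdvd_mulr _ (rdvd_refl q)).
have [r' [Jr' [m hm] r'r0]] := ideal_constant_descent q_irr q_size c0 Jr0 (etrans hd (mulrC _ _)).
have [r'u|[m' hm']] := qi _ _ hm; first exact: rdvd_unitMl Jr'.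
case: qg; have [c' c'0 hc'] := hr0 g hgh; apply: (primitive_dvd_polyCM qp c'0).
by apply: rdvd_trans (rdvd_trans r'r0 hc'); exists m'; rewrite hm -mulrA -hm' mulr1.
Qed.

Lemma primitive_polyC_unit c : c != 0 -> primitive c%:P -> runit c.
Proof.
move=> c0 cp; have [e [[|x s] [he hs ec]]] := R_factorizable c0.
  by rewrite ec big_nil mulr1.
exfalso; apply: (cp x (hs x (mem_head _ _))); rewrite ec big_cons mulrCA polyCM.
exact/rdvd_mulr/rdvd_refl.
Qed.

Lemma primitive_prime_factorization g : g != 0 -> primitive g -> has_prime_factorization g.
Proof.
move: {2}(size g) (leqnn (size g)) => n; elim: n g => [|n IH] g hs g0 gp.
  by move: hs; rewrite leqn0 size_poly_eq0 (negbTE g0).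
have nonconst a : a != 0 -> primitive a -> ~ runit a -> (1 < size a)%N.
  move=> a0 ap au; rewrite ltnNge; apply/negP => /size1_polyC ea.
  apply/au; rewrite ea; apply/polyC_runit/primitive_polyC_unit; last by rewrite -ea.
  by apply: contraNneq a0 => a00; rewrite ea a00.
have [g1|gu] := pselect (runit g).
  by exists g, [::]; rewrite big_nil mulr1.
have [gi|gni] := pselect (rirreducible g).
  exact/prime_factorization_prime/rirreducible_poly_prime/nonconst.
have [a [b [gab au bu]]] : exists a b, [/\ g = a * b, ~ runit a & ~ runit b].
  apply: contrapT => H; apply: gni; split => // a b gab.
  by apply: contrapT => /not_orP [au bu]; apply: H; exists a, b.
have a0 : a != 0 by apply: contraNneq g0 => a0; rewrite gab a0 mul0r.
have b0 : b != 0 by apply: contraNneq g0 => b0; rewrite gab b0 mulr0.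
have ap : primitive a by apply: primitive_dvd gp _; rewrite gab; apply/rdvd_mulr/rdvd_refl.
have bp : primitive b by apply: primitive_dvd gp _; rewrite gab; apply/rdvd_mull/rdvd_refl.
have := nonconst a a0 ap au; have := nonconst b b0 bp bu.
move: hs; rewrite gab size_mul // => hs sb sa.
by apply: prime_factorizationM; [apply: IH | apply: IH] => //; lia.
Qed.

Lemma content_decomposition g : g != 0 ->
  exists c g', [/\ c != 0, primitive g' & g = c%:P * g'].
Proof.
move=> g0; have : lead_coef g != 0 by rewrite lead_coef_eq0.
move=> /R_factorizable [e [s [he hs hl]]].
move: {2}(size s) (erefl (size s)) => n.
elim/ltn_ind: n g e s g0 he hs hl => n IH g e s g0 he hs hl sz.
have [gp|/existsNP [p /not_implyP [hp /contrapT [g1 eg]]]] := pselect (primitive g).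
  by exists 1, g; rewrite mul1r; split => //; apply: oner_neq0.
have g10 : g1 != 0 by apply: contraNneq g0 => g10; rewrite eg g10 mulr0.
have hl1 : lead_coef g = p * lead_coef g1 by rewrite eg lead_coefM lead_coefC.
have : rdvd p (\prod_(x <- s) x).
  by apply: (rdvd_unitMl he); rewrite -hl hl1; apply/rdvd_mulr/rdvd_refl.
move=> /(rprime_dvd_prod hp) [x xs /(prime_dvd_prime R_domain hp (hs x xs)) [u uu hx]].
have hl1' : lead_coef g1 = e * u * \prod_(y <- rem x s) y.
  apply: (dmulfI R_domain (rprime_neq0 hp)); rewrite -hl1 hl (big_rem _ xs) /= hx.
  by rewrite !mulrA (mulrC e).
have [||c [g' [c0 g'p eg1]]] := IH _ _ g1 _ (rem x s) g10 (runitM he uu) _ hl1' erefl.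
- by rewrite -sz size_rem //; case: (s) xs.
- by move=> y /mem_rem /hs.
exists (p * c), g'; split => //; first by rewrite mulf_neq0 // rprime_neq0.
by rewrite eg eg1 polyCM mulrA.
Qed.

Lemma prime_factorizable_poly : prime_factorizable {poly R}.
Proof.
move=> g g0; have [c [g' [c0 g'p eg]]] := content_decomposition g0.
have g'0 : g' != 0 by apply: contraNneq g0 => g'0; rewrite eg g'0 mulr0.
rewrite eg; apply: prime_factorizationM; first exact/prime_factorization_polyC/R_factorizable.
exact: primitive_prime_factorization.
Qed.

End Factorizable.
End PolyFactorization.

Section Monomial.
Variable R : idomainType.
Implicit Types (a b g : {poly R}).

Lemma polyXn_neq0 n : ('X^n : {poly R}) != 0.
Proof. by rewrite expf_neq0 // polyX_eq0. Qed.

Lemma polyXn_factor g : g != 0 -> exists n g1, g = 'X^n * g1 /\ g1`_0 != 0.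
Proof.
move: {2}(size g) (leqnn (size g)) => n; elim: n g => [|n IH] g hs g0.
  by move: hs; rewrite leqn0 size_poly_eq0 (negbTE g0).
have [g00|g00] := eqVneq g`_0 0; last by exists 0%N, g; rewrite expr0 mul1r.
have eg : g = 'X * drop_poly 1 g.
  by apply/polyP => -[|i]; rewrite coefXM coef_drop_poly ?addn1.
have d0 : drop_poly 1 g != 0 by apply: contraNneq g0 => d0; rewrite eg d0 mulr0.
have [|k [g1 [dg g10]]] := IH (drop_poly 1 g) _ d0; first by rewrite size_drop_poly; lia.
by exists k.+1, g1; rewrite eg dg exprS mulrA.
Qed.

Lemma monomial_factor a b c n : c != 0 -> a * b = c%:P * 'X^n ->
  exists (d : R) k, [/\ d != 0, (k <= n)%N & a = d%:P * 'X^k].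
Proof.
move=> c0 hab; have ab0 : a * b != 0 by rewrite hab mulf_neq0 ?polyC_eq0 ?polyXn_neq0.
have a0 : a != 0 by apply: contraNneq ab0 => ->; rewrite mul0r.
have b0 : b != 0 by apply: contraNneq ab0 => ->; rewrite mulr0.
have [k [a1 [ea a10]]] := polyXn_factor a0.
have [l [b1 [eb b10]]] := polyXn_factor b0.
have e1 : 'X^(k + l) * (a1 * b1) = c%:P * 'X^n by rewrite -hab ea eb exprD; ring.
have hn : (k + l)%N = n.
  have := congr1 (fun p : {poly R} => p`_(k + l)%N) e1.
  rewrite /= coefXnM ltnn subnn coef0M coefCM coefXn; case: eqP => // _.
  by rewrite mulr0 => /eqP; rewrite mulf_eq0 (negbTE a10) (negbTE b10).
move: e1; rewrite hn mulrC => /(mulIf (polyXn_neq0 n)) e2.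
have a1_0 : a1 != 0 by apply: contraNneq a10 => ->; rewrite coef0.
have b1_0 : b1 != 0 by apply: contraNneq b10 => ->; rewrite coef0.
have sa1 : size a1 = 1%N.
  have := congr1 (fun p : {poly R} => size p) e2; rewrite /= size_mul // size_polyC c0.
  by have := size_poly_gt0 a1; have := size_poly_gt0 b1; rewrite a1_0 b1_0 /=; lia.
exists a1`_0, k; split => //; first by rewrite -hn leq_addr.
by rewrite ea {1}(size1_polyC (eq_leq sa1)) mulrC.
Qed.

Lemma polyX_irreducible : rirreducible ('X : {poly R}).
Proof.
split; [by rewrite polyX_eq0 | by move/runitP; rewrite poly_unitE size_polyX |].
move=> b c hbc; have bc0 : b * c != 0 by rewrite -hbc polyX_eq0.
have b0 : b != 0 by apply: contraNneq bc0 => ->; rewrite mul0r.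
have c0 : c != 0 by apply: contraNneq bc0 => ->; rewrite mulr0.
have hs := congr1 (fun p : {poly R} => size p) hbc; rewrite /= size_polyX size_mul // in hs.
change (2%N = (size b + size c).-1) in hs.
have hl := congr1 lead_coef hbc; rewrite lead_coefX lead_coefM in hl.
have := size_poly_gt0 b; have := size_poly_gt0 c; rewrite b0 c0 => cpos bpos.
have [sb|sb] := eqVneq (size b) 1%N.
  left; rewrite (size1_polyC (eq_leq sb)); apply/polyC_runit.
  by exists (lead_coef c); rewrite hl lead_coefE sb.
have sc : size c = 1%N by move/eqP: sb; lia.
right; rewrite (size1_polyC (eq_leq sc)); apply/polyC_runit.
by exists (lead_coef b); rewrite hl (lead_coefE c) sc mulrC.
Qed.

End Monomial.

Section UVQuotient.
Local Open Scope quotient_scope.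
Variables (R : idomainType) (f : R).
Hypotheses (f_neq0 : f != 0) (f_nunit : f \isn't a GRing.unit).

Local Notation T := {poly {poly R}}.
Local Notation S := (S_uv f_nunit).
Implicit Types (p q r : T) (a b g : {poly R}) (s t : S).

Definition piS : T -> S := \pi_S.
HB.instance Definition _ := GRing.RMorphism.on piS.

Definition polyS : {poly R} -> S := piS \o polyC.
HB.instance Definition _ := GRing.RMorphism.on polyS.

Definition U : S := polyS 'X.
Definition V : S := piS 'X.

Lemma piS_eq p q : piS p = piS q <-> exists r, p - q = r * uv_f f.
Proof.
rewrite /piS; split => [/eqP|h]; last apply/eqP; rewrite piE Quotient.equivE.
  by move/asboolP.
exact/asboolP.
Qed.

Lemma piS_eq0 p : piS p = 0 <-> exists r, p = r * uv_f f.
Proof. by rewrite -(rmorph0 piS) piS_eq subr0. Qed.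

Lemma piS_surj s : exists p, s = piS p.
Proof. by exists (repr s); rewrite /piS reprK. Qed.

Lemma mulUV : U * V = polyS f%:P.
Proof.
apply/eqP; rewrite -subr_eq0 /U /V /polyS /= -rmorphM -rmorphB; apply/eqP.
by apply/piS_eq0; exists 1; rewrite mul1r.
Qed.

(* [S] embeds in [R[u, 1/u]]: [v] becomes [f/u]. *)
Lemma Uexp_mul_polyS s : exists n a, U ^+ n * s = polyS a.
Proof.
have [p ->] := piS_surj s.
elim/poly_ind: p => [|p c [n [a ha]]]; first by exists 0%N, 0; rewrite !rmorph0 mulr0.
exists n.+1, (f%:P * a + 'X ^+ n.+1 * c).
rewrite !rmorphD !rmorphM /= -ha rmorphXn -/U -/V.
have -> : polyS f%:P = U * V by rewrite mulUV.
by rewrite exprS; ring.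
Qed.

Lemma size_uv_f : size (uv_f f) = 2%N.
Proof.
rewrite /uv_f /var_u /var_v -polyCN size_MXaddC.
by rewrite polyC_eq0 polyX_eq0 /= size_polyC polyX_eq0.
Qed.

Lemma polyS_inj : injective polyS.
Proof.
move=> a b /piS_eq [r hr]; apply/eqP; rewrite -subr_eq0 -polyC_eq0 polyCB hr.
have [->|r0] := eqVneq r 0; first by rewrite mul0r.
have : (size (r * uv_f f)%R <= 1)%N by rewrite -hr -polyCB size_polyC leq_b1.
have uv0 : uv_f f != 0 by rewrite -size_poly_eq0 size_uv_f.
by rewrite size_mul // size_uv_f addn2 ltnS leqn0 size_poly_eq0 (negbTE r0).
Qed.

Lemma U_neq0 : U != 0.
Proof. by rewrite /U raddf_eq0 ?polyX_eq0 //; apply: polyS_inj. Qed.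

Definition at_u0 : T -> {poly R} := map_poly (horner_eval 0).
HB.instance Definition _ := GRing.RMorphism.on at_u0.

Lemma at_u0C a : at_u0 a%:P = (a`_0)%:P.
Proof. by rewrite /at_u0 map_polyC /= horner_evalE horner_coef0. Qed.

Lemma at_u0_uv_f : at_u0 (uv_f f) = - f%:P.
Proof. by rewrite /uv_f rmorphB rmorphM /= !at_u0C coefX coefC mul0r sub0r. Qed.

Lemma coef_at_u0 p i : (at_u0 p)`_i = (p`_i)`_0.
Proof. by rewrite coef_map /= horner_evalE horner_coef0. Qed.

Lemma split_at_u0 p : exists p', p = (at_u0 p)^:P + var_u R * p'.
Proof.
exists (\poly_(i < size p) drop_poly 1 p`_i).
apply/polyP => i; rewrite coefD /var_u coefCM coef_map coef_at_u0 coef_poly.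
case: ltnP => hi; last by rewrite nth_default // mulr0 addr0 coef0.
apply/polyP => j; rewrite coefD coefC coefXM coef_drop_poly.
by case: j => [|j] /=; rewrite ?addr0 ?add0r ?addn1.
Qed.

Lemma U_dvd_piS p : rdvd U (piS p) <-> rdvd f%:P (at_u0 p).
Proof.
split.
  move=> [s]; have [q ->] := piS_surj s; rewrite /U /polyS /= -rmorphM.
  move=> /piS_eq [r /(congr1 at_u0)]; rewrite !rmorphB !rmorphM /= at_u0C coefX.
  by rewrite mul0r subr0 at_u0_uv_f => ->; apply/rdvd_mull; exists (-1); rewrite mulrN1.
move=> [g hg]; have [p' ->] := split_at_u0 p.
exists (V * piS (map_poly polyC g) + piS p').
rewrite rmorphD hg rmorphM /= map_polyC /= !rmorphM /=.
have -> : piS (f%:P)%:P = U * V by rewrite mulUV.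
by rewrite /U /polyS /=; ring.
Qed.

Lemma lregU : GRing.lreg U.
Proof.
apply/mulrI0_lreg => s; have [p ->] := piS_surj s.
rewrite /U /polyS /= -rmorphM => /piS_eq0 [r hr].
have r0 : at_u0 r = 0.
  move: (congr1 at_u0 hr); rewrite !rmorphM /= at_u0C coefX mul0r at_u0_uv_f.
  by move/esym/eqP; rewrite mulf_eq0 oppr_eq0 polyC_eq0 (negbTE f_neq0) orbF => /eqP.
have [r' er] := split_at_u0 r; rewrite r0 rmorph0 add0r in er.
apply/piS_eq0; exists r'; apply: (@mulfI _ (var_u R)).
  by rewrite /var_u polyC_eq0 polyX_eq0.
by rewrite [LHS]hr er mulrA.
Qed.

Lemma lregUX n : GRing.lreg (U ^+ n).
Proof. exact: lregX lregU. Qed.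

Lemma S_domain : is_domain S.
Proof.
move=> s t st0; have [n [a ha]] := Uexp_mul_polyS s; have [m [b hb]] := Uexp_mul_polyS t.
have /eqP : polyS (a * b) = 0 by rewrite rmorphM /= -ha -hb mulrACA -exprD st0 mulr0.
rewrite raddf_eq0; last exact: polyS_inj.
rewrite mulf_eq0 => /orP [] /eqP ab0; [left | right]; apply/eqP.
  by rewrite -(mulrI_eq0 _ (@lregUX n)) ha ab0 rmorph0.
by rewrite -(mulrI_eq0 _ (@lregUX m)) hb ab0 rmorph0.
Qed.

(* [uv_diag] sends [u^i v^j] to [f^i] if [i = j] and to [0] otherwise, hence
   vanishes on the ideal [(uv - f)]. *)
Definition uv_diag p : R := \sum_(j < size p) (p`_j)`_j * f ^+ j.

Lemma uv_diag_widen n p : (size p <= n)%N -> uv_diag p = \sum_(j < n) (p`_j)`_j * f ^+ j.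
Proof.
move=> hn; rewrite /uv_diag (big_ord_widen n (fun j => (p`_j)`_j * f ^+ j) hn) big_mkcond /=.
by apply: eq_bigr => j _; case: ltnP => // hj; rewrite (nth_default _ hj) coef0 mul0r.
Qed.

Lemma uv_diagB p q : uv_diag (p - q) = uv_diag p - uv_diag q.
Proof.
set n := maxn (size p) (size q).
have hpq : (size (p - q)%R <= n)%N by apply: leq_trans (size_polyD _ _) _; rewrite size_polyN.
rewrite (uv_diag_widen (leq_maxl _ _ : size p <= n)%N).
rewrite (uv_diag_widen (leq_maxr _ _ : size q <= n)%N) (uv_diag_widen hpq) -sumrB.
by apply: eq_bigr => j _; rewrite !coefB mulrBl.
Qed.

Lemma uv_diag_mul_uv_f q : uv_diag (q * uv_f f) = 0.
Proof.
set n := (size q).+1.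
have h1 : (size (q * (f%:P)%:P)%R <= n)%N.
  by apply: leq_trans (size_polyMleq _ _) _; rewrite size_polyC /n; case: (_ != _) => /=; lia.
have h2 : (size (q * var_u R * var_v R)%R <= n)%N.
  apply: leq_trans (size_polyMleq _ _) _; rewrite size_polyX addn2 /=.
  by apply: leq_trans (size_polyMleq _ _) _; rewrite /var_u size_polyC polyX_eq0 /= addn1.
have -> : q * uv_f f = q * var_u R * var_v R - q * (f%:P)%:P by rewrite /uv_f mulrBr mulrA.
rewrite uv_diagB (uv_diag_widen h1) (uv_diag_widen h2).
rewrite big_ord_recl /= /var_v /var_u coefMX /= coef0 mul0r add0r.
have -> : \sum_(i < size q) ((q * ('X)%:P * 'X)`_(bump 0 i))`_(bump 0 i) * f ^+ bump 0 i
   = f * uv_diag q.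
  rewrite /uv_diag big_distrr /=; apply: eq_bigr => j _.
  by rewrite /bump /= add1n coefMX /= coefMC coefMX /= exprS; ring.
rewrite big_ord_recr /= -/n coefMC (nth_default _ (leqnn _)) mul0r coef0 mul0r addr0.
by rewrite /uv_diag big_distrr /= -sumrB; apply: big1 => j _; rewrite !coefMC; ring.
Qed.

Lemma uv_diag_piS p q : piS p = piS q -> uv_diag p = uv_diag q.
Proof. by move/piS_eq => [r hr]; apply/eqP; rewrite -subr_eq0 -uv_diagB hr uv_diag_mul_uv_f. Qed.

Lemma uv_diagC a : uv_diag a%:P = a`_0.
Proof. by rewrite (@uv_diag_widen 1) ?size_polyC ?leq_b1 // big_ord1 coefC expr0 mulr1. Qed.

Lemma rdvd_uv_diag_Xn n p : rdvd (f ^+ n) (uv_diag ('X^n%:P * p)).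
Proof.
apply: rdvd_sum => j _; rewrite coefCM coefXnM.
by case: ltnP => hj; [rewrite mul0r; apply: rdvd0 | apply/rdvd_mull/rdvd_expn].
Qed.

Lemma Uexp_dvd_polyS n a : rdvd (U ^+ n) (polyS a) -> rdvd (f ^+ n) a`_0.
Proof.
move=> [s]; have [r ->] := piS_surj s.
rewrite /U /polyS /= -!rmorphXn -rmorphM => /uv_diag_piS; rewrite uv_diagC => ->.
exact: rdvd_uv_diag_Xn.
Qed.

Lemma f_nrunit : ~ runit f.
Proof. by move/runitP; apply/negP. Qed.

Lemma U_nunit : ~ runit U.
Proof.
move=> hU; have : rdvd U (piS 1) by rewrite rmorph1; apply: rdvd_unit.
by move/U_dvd_piS; rewrite rmorph1 => /rdvd_polyC /(_ 0%N); rewrite coefC; apply: f_nrunit.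
Qed.

Lemma V_nunit : ~ runit V.
Proof.
move=> [s hs]; have [n [a ha]] := Uexp_mul_polyS s.
have : polyS 'X^(n.+1) = polyS (f%:P * a).
  rewrite rmorphM rmorphXn /= -/U -ha -[LHS]mulr1 hs.
  by rewrite -mulUV exprS; ring.
move/polyS_inj/(congr1 (fun p : {poly R} => p`_n.+1)); rewrite coefXn eqxx coefCM => h.
by apply: f_nrunit; exists a`_n.+1.
Qed.

Lemma polyS_polyC_runitP c : runit (polyS c%:P) <-> runit c.
Proof.
split => [[s hs]|]; last by move/polyC_runit/(rmorph_runit polyS).
have [n [a ha]] := Uexp_mul_polyS s.
have : polyS 'X^n = polyS (c%:P * a) by rewrite rmorphM rmorphXn /= -/U -ha mulrCA -hs mulr1.
move/polyS_inj/(congr1 (fun p : {poly R} => p`_n)); rewrite coefXn eqxx coefCM => h.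
by exists a`_n.
Qed.

Lemma polyS_polyC_rdvd c d : rdvd (polyS c%:P) (polyS d%:P) -> rdvd c d.
Proof.
move=> [s hs]; have [n [a ha]] := Uexp_mul_polyS s.
have : polyS (d%:P * 'X^n) = polyS (c%:P * a).
  by rewrite !rmorphM rmorphXn /= -/U -ha hs; ring.
move/polyS_inj/(congr1 (fun p : {poly R} => p`_n)).
by rewrite coefCM coefXn eqxx mulr1 coefCM => ->; exists a`_n.
Qed.

Lemma polyS_polyC_eq0 c : (polyS c%:P == 0) = (c == 0).
Proof. by rewrite raddf_eq0 ?polyC_eq0 //; apply: polyS_inj. Qed.

Lemma U_dvd_polyS_polyC c : rdvd U (polyS c%:P) -> rdvd f c.
Proof. by move/U_dvd_piS; rewrite at_u0C coefC /= => /rdvd_polyC /(_ 0%N); rewrite !coefC. Qed.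

Lemma runit_of_Uexp_mul n k s c : runit c -> (k <= n)%N ->
  U ^+ n * s = polyS c%:P * U ^+ k -> runit s.
Proof.
move=> cu kn h; have /(@lregUX k) : U ^+ k * (U ^+ (n - k) * s) = U ^+ k * polyS c%:P.
  by rewrite mulrA -exprD subnKC // h mulrC.
case: (n - k)%N => [|m]; first by rewrite expr0 mul1r => ->; apply/polyS_polyC_runitP.
move=> h'; case: U_nunit; apply: runit_dvd (_ : runit (polyS c%:P)) _.
  exact/polyS_polyC_runitP.
by rewrite -h' exprS -mulrA; apply/rdvd_mulr/rdvd_refl.
Qed.

Lemma U_irreducible : rirreducible U.
Proof.
split; [exact: U_neq0 | exact: U_nunit |] => s t hst.
have [n [a ha]] := Uexp_mul_polyS s; have [m [b hb]] := Uexp_mul_polyS t.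
have e1 : a * b = 1%:P * 'X^((n + m).+1).
  apply: polyS_inj; rewrite !rmorphM rmorphXn /= -/U -ha -hb rmorph1 mul1r hst.
  by rewrite exprS exprD; ring.
have [c [k [c0 _ ea]]] := monomial_factor (oner_neq0 _) e1.
have [d [l [d0 _ eb]]] := monomial_factor (oner_neq0 _) (etrans (mulrC b a) e1).
move: e1; rewrite ea eb mulrACA -polyCM -exprD => /(congr1 (fun p : {poly R} => p`_(k + l)%N)).
rewrite /= coefCM coefXn eqxx mulr1 coefCM coefXn mul1r.
have cd0 := mulf_neq0 c0 d0.
case: eqP => [hkl hcd|_ hcd]; last by move: cd0; rewrite hcd eqxx.
have [kn|nk] := leqP k n.
  left; apply: (@runit_of_Uexp_mul n k s c); [by exists d | by [] |].
  by rewrite ha ea rmorphM rmorphXn.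
right; apply: (@runit_of_Uexp_mul m l t d); [by exists c; rewrite mulrC | lia |].
by rewrite hb eb rmorphM rmorphXn.
Qed.

Lemma dvd_polyS_polyC s (d : R) : d != 0 -> rdvd s (polyS d%:P) ->
  exists c k, c != 0 /\ (s = polyS c%:P * U ^+ k \/ s = polyS c%:P * V ^+ k).
Proof.
move=> d0 [t ht]; have [n [b hb]] := Uexp_mul_polyS s; have [m [b' hb']] := Uexp_mul_polyS t.
have e1 : b * b' = d%:P * 'X^(n + m).
  by apply: polyS_inj; rewrite !rmorphM rmorphXn /= -/U -hb -hb' ht exprD; ring.
have [c [k [c0 _ eb]]] := monomial_factor d0 e1.
have e2 : U ^+ n * s = polyS c%:P * U ^+ k by rewrite hb eb rmorphM rmorphXn.
have [nk|kn] := leqP n k.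
  exists c, (k - n)%N; split => //; left; apply: (@lregUX n).
  by rewrite e2 mulrCA -exprD subnKC.
have e3 : U ^+ (n - k) * s = polyS c%:P.
  by apply: (@lregUX k); rewrite mulrA -exprD subnKC ?(ltnW kn) // e2 mulrC.
have [c' hc'] : rdvd (f ^+ (n - k)) c.
  have := @Uexp_dvd_polyS (n - k) c%:P; rewrite coefC /=; apply.
  by rewrite -e3; apply/rdvd_mulr/rdvd_refl.
exists c', (n - k)%N; split; first by apply: contraNneq c0 => c'0; rewrite hc' c'0 mulr0.
right; apply: (@lregUX (n - k)); rewrite e3 hc' polyCM polyC_exp !rmorphM rmorphXn /= -mulUV exprMn.
by ring.
Qed.

Lemma polyS_polyC_prime c : rprime (polyS c%:P) -> rprime c.
Proof.
move=> [c0 cu cp]; split.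
- by rewrite -polyS_polyC_eq0.
- by move/polyS_polyC_runitP.
- move=> x y [z hz]; have : rdvd (polyS c%:P) (polyS x%:P * polyS y%:P).
    by rewrite -rmorphM -polyCM hz polyCM rmorphM; apply/rdvd_mulr/rdvd_refl.
  by move/cp => [] /polyS_polyC_rdvd; [left|right].
Qed.

Lemma runit_polyS s : runit s -> exists2 c, runit c & s = polyS c%:P.
Proof.
move=> su; have [c [k [c0 ec]]] := dvd_polyS_polyC (oner_neq0 R) (rdvd_unit _ su).
have [W [Wu {}ec]] : exists W, ~ runit W /\ s = polyS c%:P * W ^+ k.
  by case: ec => ->; [exists U; split; first exact: U_nunit | exists V; split; first exact: V_nunit].
case: k ec => [|k] ec; last first.
  by case: Wu; apply: runit_dvd su _; rewrite ec exprS mulrCA; apply/rdvd_mulr/rdvd_refl.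
exists c; last by rewrite ec mulr1.
by apply/polyS_polyC_runitP; rewrite -(mulr1 (polyS _)) -(expr0 W) -ec.
Qed.

Lemma prime_dvd_polyS_polyC s d : d != 0 -> rprime s -> rdvd s (polyS d%:P) ->
  [\/ exists2 c, rprime c & s = polyS c%:P,
      exists2 c, runit c & s = polyS c%:P * U
    | exists2 c, runit c & s = polyS c%:P * V].
Proof.
move=> d0 sp /(dvd_polyS_polyC d0) [c [k [_ [es|es]]]]; rewrite es in sp *.
  have [k0|[k1 /polyS_polyC_runitP cu]] := rprime_mul_exp S_domain U_nunit sp.
    by rewrite k0 mulr1 in sp *; constructor 1; exists c => //; apply: polyS_polyC_prime.
  by constructor 2; exists c; rewrite ?k1.
have [k0|[k1 /polyS_polyC_runitP cu]] := rprime_mul_exp S_domain V_nunit sp.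
  by rewrite k0 mulr1 in sp *; constructor 1; exists c => //; apply: polyS_polyC_prime.
by constructor 3; exists c; rewrite ?k1.
Qed.

Lemma prod_primes_dvd_polyS_polyC d (ss : seq S) : d != 0 ->
  (forall s, s \in ss -> rprime s /\ rdvd s (polyS d%:P)) ->
  exists e (cs : seq R) m n, [/\ runit e, (forall x, x \in cs -> rprime x) &
    \prod_(s <- ss) s = polyS (e * \prod_(x <- cs) x)%:P * U ^+ m * V ^+ n].
Proof.
move=> d0; elim: ss => [|s ss IH] hss.
  exists 1, [::], 0%N, 0%N; split; [exact: runit1 | by [] |].
  by rewrite !big_nil !expr0 !mulr1 rmorph1.
have [|e [cs [m [n [he hcs hp]]]]] := IH; first by move=> x xs; apply: hss; rewrite in_cons xs orbT.
have [sp sd] := hss s (mem_head _ _); rewrite big_cons hp.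
case: (prime_dvd_polyS_polyC d0 sp sd) => -[c hc ->].
- exists e, (c :: cs), m, n; split => //.
    by move=> x; rewrite in_cons => /orP [/eqP -> //|/hcs].
  by rewrite big_cons !polyCM !rmorphM /=; ring.
- exists (e * c), cs, m.+1, n; split; [exact: runitM | by [] |].
  by rewrite exprS !polyCM !rmorphM /=; ring.
- exists (e * c), cs, m, n.+1; split; [exact: runitM | by [] |].
  by rewrite exprS !polyCM !rmorphM /=; ring.
Qed.

Lemma polyS_polyC_eq_UV d c m n : d != 0 ->
  polyS d%:P = polyS c%:P * U ^+ m * V ^+ n -> m = n /\ d = c * f ^+ m.
Proof.
move=> d0 h.
have : polyS (d%:P * 'X^n) = polyS ((c * f ^+ n)%:P * 'X^m).
  by rewrite !rmorphM !rmorphXn /= h -/U -mulUV exprMn; ring.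
move/polyS_inj/(congr1 (fun p : {poly R} => p`_n)); rewrite /= !coefCM !coefXn eqxx mulr1.
by case: eqP => [->|_]; [rewrite mulr1 | rewrite mulr0 => /eqP; rewrite (negbTE d0)].
Qed.

Lemma UFD_S_rprime_f : UFD S -> rprime f.
Proof.
move=> hS; have [_ _ Up] := UFD_irreducible_prime hS U_irreducible.
split => // [|b c [d hd]]; first exact: f_nrunit.
have : rdvd U (polyS b%:P * polyS c%:P).
  rewrite -rmorphM -polyCM hd polyCM rmorphM /= -mulUV -mulrA.
  exact/rdvd_mulr/rdvd_refl.
by case/Up => /U_dvd_polyS_polyC; [left | right].
Qed.

Lemma UFD_S_UFD_R : UFD S -> UFD R.
Proof.
move=> hS; apply/UFDP; split => [|a a0]; first exact: idomain_domain.
have a0' : polyS a%:P != 0 by rewrite polyS_polyC_eq0.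
have [E [ss [/runit_polyS [e eu ->] hss ea]]] := (proj1 (UFDP S) hS).2 _ a0'.
have [] := @prod_primes_dvd_polyS_polyC a ss a0.
  by move=> s ss_s; split; [apply: hss | rewrite ea; apply/rdvd_mull/rdvd_prod].
move=> e' [cs [m [n [he' hcs hp]]]].
have : polyS a%:P = polyS (e * (e' * \prod_(x <- cs) x))%:P * U ^+ m * V ^+ n.
  by rewrite ea hp !polyCM !rmorphM /=; ring.
move=> /(polyS_polyC_eq_UV a0) [_ ->].
exists (e * e'), (cs ++ nseq m f); split; [exact: runitM | |].
  move=> x; rewrite mem_cat mem_nseq => /orP [/hcs // | /andP [_ /eqP ->]].
  exact: UFD_S_rprime_f.
by rewrite big_cat /= prod_nseq; ring.
Qed.

Section Backward.
Hypotheses (R_factorizable : prime_factorizable R) (f_prime : rprime f).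

Lemma U_prime : rprime U.
Proof.
split; [exact: U_neq0 | exact: U_nunit |] => s t.
have [p ->] := piS_surj s; have [q ->] := piS_surj t.
rewrite -rmorphM => /U_dvd_piS; rewrite rmorphM => h.
by have [_ _ /(_ _ _ h) [] /U_dvd_piS] := polyC_prime f_prime; [left | right].
Qed.

Lemma rdvd_of_Uexp_mul n k s w t : ~ rdvd U w ->
  U ^+ n * s = U ^+ k * (w * t) -> rdvd w s.
Proof.
move=> Uw h; have [kn|nk] := leqP n k.
  exists (U ^+ (k - n) * t); apply: (@lregUX n).
  by rewrite h -{1}(subnKC kn) exprD; ring.
have h2 : U ^+ (n - k) * s = w * t.
  by apply: (@lregUX k); rewrite -h -{2}(subnKC (ltnW nk)) exprD; ring.
have /(prime_pow_dvd_coprime S_domain U_prime Uw) [t' ht'] : rdvd (U ^+ (n - k)) (w * t).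
  by rewrite -h2; apply/rdvd_mulr/rdvd_refl.
by exists t'; apply: (@lregUX (n - k)); rewrite h2 ht' mulrCA.
Qed.

Section PrimeCofactor.
Variables (q : {poly R}) (j : nat) (w : S).
Hypotheses (q_prime : rprime q) (qX : ~ rdvd q 'X).
Hypotheses (qw : polyS q = U ^+ j * w) (Uw : ~ rdvd U w).

Lemma prime_cofactor_dvdM s t : rdvd w (s * t) -> rdvd w s \/ rdvd w t.
Proof.
move=> [z hz]; have [n1 [a ha]] := Uexp_mul_polyS s; have [n2 [b hb]] := Uexp_mul_polyS t.
have [n3 [c hc]] := Uexp_mul_polyS z.
have e1 : 'X ^+ (n3 + j) * (a * b) = 'X ^+ (n1 + n2) * (q * c).
  apply: polyS_inj; rewrite !rmorphM !rmorphXn /= -/U -ha -hb -hc qw !exprD.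
  transitivity (U ^+ n1 * U ^+ n2 * (U ^+ j * U ^+ n3) * (s * t)); first by ring.
  by rewrite hz; ring.
have [_ _ qp] := q_prime.
have /qp [/(rprime_dvd_exp q_prime) //|/qp [[a' ea']|[b' eb']]] :
    rdvd q ('X ^+ (n3 + j) * (a * b)) by rewrite e1 mulrCA; apply/rdvd_mulr/rdvd_refl.
  by left; apply: (@rdvd_of_Uexp_mul n1 j s w (polyS a')); rewrite // ha ea' rmorphM /= qw mulrA.
by right; apply: (@rdvd_of_Uexp_mul n2 j t w (polyS b')); rewrite // hb eb' rmorphM /= qw mulrA.
Qed.

End PrimeCofactor.

Lemma polyS_prime g : rprime g -> ~ rdvd g 'X ->
  exists j w, [/\ polyS g = U ^+ j * w, ~ rdvd U w &
    forall s t, rdvd w (s * t) -> rdvd w s \/ rdvd w t].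
Proof.
move=> g_prime gX; have g00 : g`_0 != 0.
  apply/eqP => g00; apply: gX; have eg : g = 'X * drop_poly 1 g.
    by apply/polyP => -[|i]; rewrite coefXM coef_drop_poly ?addn1.
  have [_ _ /(_ _ _ eg) [Xu|[d hd]]] := rprime_irreducible (@idomain_domain _) g_prime.
    by have [_ /(_ Xu)] := polyX_irreducible R.
  by exists d; rewrite {1}eg -mulrA -hd mulr1.
have [n hn] := prime_factorizable_pow_ndvd (@idomain_domain R) R_factorizable f_neq0 f_nrunit g00.
have [j [w [gw Uw]]] : exists j w, polyS g = U ^+ j * w /\ ~ rdvd U w.
  by apply: rdvd_exp_max; exists n => /Uexp_dvd_polyS.
by exists j, w; split => // s t; apply: (prime_cofactor_dvdM g_prime gX gw Uw).
Qed.

Lemma polyS_prime_factorization_prime g : rprime g -> has_prime_factorization (polyS g).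
Proof.
move=> g_prime; have [g0 gu _] := g_prime.
have [[r hr]|gX] := pselect (rdvd g 'X).
  have [_ _ /(_ _ _ hr) [//|[r' hr']]] := polyX_irreducible R.
  have -> : g = 'X * r' by rewrite -[g]mulr1 hr' mulrA -hr.
  rewrite rmorphM mulrC; apply: prime_factorizationM; last exact/prime_factorization_prime/U_prime.
  by apply/prime_factorization_unit/rmorph_runit; exists r; rewrite hr' mulrC.
have [j [w [gw Uw wp]]] := polyS_prime g_prime gX.
rewrite gw -prod_nseq; apply: prime_factorizationM.
  by apply: prime_factorization_prod => x; rewrite mem_nseq => /andP [_ /eqP ->];
     apply/prime_factorization_prime/U_prime.
have [wu|wu] := pselect (runit w); first exact: prime_factorization_unit.
apply: prime_factorization_prime; split => //.
apply: contraNneq g0 => w0; have : polyS g == 0 by rewrite gw w0 mulr0.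
by rewrite raddf_eq0 //; apply: polyS_inj.
Qed.

Lemma polyS_prime_factorization a : a != 0 -> has_prime_factorization (polyS a).
Proof.
move=> a0; have [e [gs [he hgs ->]]] := prime_factorizable_poly R_factorizable a0.
rewrite rmorphM rmorph_prod; apply: prime_factorizationM.
  exact/prime_factorization_unit/rmorph_runit.
by apply: prime_factorization_prod => g /hgs; apply: polyS_prime_factorization_prime.
Qed.

Lemma S_prime_factorizable : prime_factorizable S.
Proof.
move=> s s0; have [m [a ha]] := Uexp_mul_polyS s.
have a0 : a != 0.
  apply: contraNneq s0 => a0; move: ha; rewrite a0 rmorph0 => /eqP.
  by rewrite (mulrI_eq0 _ (@lregUX m)).
apply: (prime_factorization_cancel_exp S_domain U_prime (n := m)).
by rewrite ha; apply: polyS_prime_factorization.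
Qed.

End Backward.
End UVQuotient.

Theorem theorem2p1 (R : idomainType) (f : R) (hf0 : f != 0)
    (hfu : f \isn't a GRing.unit) :
  UFD (S_uv hfu) <-> UFD R /\ rprime f.
Proof.
split=> [hS | [/UFDP [_ R_factorizable] f_prime]].
  by split; [apply: UFD_S_UFD_R hS | apply: UFD_S_rprime_f hS].
by apply/UFDP; split; [apply: S_domain | apply: S_prime_factorizable].
Qed.
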